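(* Let $A$ be a finite set. The family $\mathscr U_A=\{U(\overset{*}{<})\}_{\overset{*}{<}\in R^+(A)}$ is a proper $\Sigma_A$-equivariant, good and complete open cover of the ordered configuration space $\mathrm{OConf}(A,\mathbb R^2)=\{f:A\to\mathbb R^2\mid f\text{ injective}\}$.
   Context: A strict partial order is a transitive irreflexive relation; it is semi-linear if it is induced by a surjection $h:A\to\{1,\dots,l\}$ (i.e. $a<b$ iff $h(a)<h(b)$). $<_1\bar\cup<_2$ denotes the transitive closure of the union. A double order on $A$ is a pair $\overset{*}{<}=(\overset{x}{<},\overset{y}{<})$ of strict partial orders such that any two distinct elements are comparable by $\overset{x}{<}$ or by $\overset{y}{<}$; regular if $\overset{x}{<}$ is semi-linear and $a\overset{x}{<}b$ implies $a,b$ are not $\overset{y}{<}$-comparable; semi-regular if it is the componentwise $\bar\cup$ of finitely many regular double orders. $R^+(A)$ is the set of semi-regular double orders. For a double order, $U(\overset{*}{<})=\{(f_x,f_y):A\to\mathbb R^2\mid a\overset{x}{<}b\Rightarrow f_x(a)<f_x(b),\ a\overset{y}{<}b\Rightarrow f_y(a)<f_y(b)\}$. $\Sigma_A$ acts on $\mathrm{OConf}(A,\mathbb R^2)$ by precomposition and on double orders by $(\overset{x}{<},\overset{y}{<})\sigma=(\overset{x}{<}\sigma,\overset{y}{<}\sigma)$, $a(\overset{x}{<}\sigma)b$ iff $\sigma(a)\overset{x}{<}\sigma(b)$ (similarly for $y$). A cover $\{U_i\}_{i\in I}$ is $G$-equivariant if $G$ acts on $I$ with $U_ig=U_{ig}$;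 proper if additionally $U_i\cap U_{ig}=\emptyset$ for $g\ne1$; good if all non-empty intersections are contractible; complete if closed under non-empty intersections. *)

From HB Require Import structures.
From mathcomp Require Import all_boot all_order all_algebra all_fingroup.
From mathcomp Require Import all_classical all_reals all_analysis.
From Stdlib Require Import Relations.Relation_Operators.
From Stdlib Require List.

Set Implicit Arguments.
Unset Strict Implicit.
Unset Printing Implicit Defensive.

Import Order.TTheory GRing.Theory Num.Theory.
Import numFieldNormedType.Exports.
Local Open Scope classical_set_scope.
Local Open Scope ring_scope.

Definition prel (A : Type) := A -> A -> Prop.

Definition strict_porder (A : Type) (r : prel A) : Prop :=
  (forall a, ~ r a a) /\ (forall a b c, r a b -> r b c -> r a c).

Definition comparable_by (A : Type) (r : prel A) (a b : A) : Prop :=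
  r a b \/ r b a.

Definition semi_linear (A : Type) (r : prel A) : Prop :=
  exists (l : nat) (h : A -> nat),
    (forall a, (1 <= h a <= l)%N) /\
    (forall k, (1 <= k <= l)%N -> exists a, h a = k) /\
    (forall a b, r a b <-> (h a < h b)%N).

Definition tc_union (A : Type) (rs : seq (prel A)) : prel A :=
  clos_trans A (fun a b => exists2 r, List.In r rs & r a b).

(** a double order is a pair (<x, <y) *)
Definition dord (A : Type) := (prel A * prel A)%type.

Definition is_double_order (A : Type) (d : dord A) : Prop :=
  strict_porder d.1 /\ strict_porder d.2 /\
  (forall a b, a <> b -> comparable_by d.1 a b \/ comparable_by d.2 a b).

Definition regular (A : Type) (d : dord A) : Prop :=
  is_double_order d /\ semi_linear d.1 /\
  (forall a b, d.1 a b -> ~ comparable_by d.2 a b).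

Definition dunion (A : Type) (ds : seq (dord A)) : dord A :=
  (tc_union (map fst ds), tc_union (map snd ds)).

Definition semi_regular (A : Type) (d : dord A) : Prop :=
  is_double_order d /\
  exists ds : seq (dord A), (forall e, List.In e ds -> regular e) /\ d = dunion ds.

Notation config R A := {ptws A -> (R * R)%type}.

Definition OConf (R : realType) (A : Type) : set (config R A) :=
  [set f | injective f].

Definition Uset (R : realType) (A : Type) (d : dord A) : set (config R A) :=
  [set f | (forall a b, d.1 a b -> (f a).1 < (f b).1) /\
           (forall a b, d.2 a b -> (f a).2 < (f b).2)].

(** right action of permutations *)
Definition dord_act (A : finType) (d : dord A) (s : {perm A}) : dord A :=
  (fun a b => d.1 (s a) (s b), fun a b => d.2 (s a) (s b)).

Definition conf_act (R : realType) (A : finType) (f : config R A) (s : {perm A})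
  : config R A := fun a => f (s a).

Definition set_act (R : realType) (A : finType) (U : set (config R A)) (s : {perm A})
  : set (config R A) := [set conf_act f s | f in U].

Definition open_in (T : topologicalType) (X U : set T) : Prop :=
  exists2 V, open V & U = V `&` X.

Definition contractible (R : realType) (T : topologicalType) (X : set T) : Prop :=
  exists2 c : T, X c &
  exists H : (R * T)%type -> T,
    [/\ {within [set p | 0 <= p.1 <= 1 /\ X p.2], continuous H},
        (forall t x, 0 <= t <= 1 -> X x -> X (H (t, x))),
        (forall x, X x -> H (0, x) = x) &
        (forall x, X x -> H (1, x) = c)].

Definition intersection (T : Type) (I : Type) (F : I -> set T) (ds : seq I) : set T :=
  [set x | forall d, List.In d ds -> F d x].

Arguments OConf R A : clear implicits.
Arguments Uset R {A} d.
Arguments contractible R {T} X.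
Arguments set_act {R A} U s.
Arguments intersection {T I} F ds.

From HB Require Import structures.
From mathcomp Require Import all_boot all_order all_algebra all_fingroup.
From mathcomp Require Import all_classical all_reals all_analysis.
From Stdlib Require List.
From Stdlib Require Import Relations.Relation_Operators.
Import numFieldNormedType.Exports.
Import Order.TTheory GRing.Theory Num.Theory.

Local Open Scope classical_set_scope.
Local Open Scope ring_scope.

(** Each set U(<) is cut out by finitely many strict inequalities between
    coordinates, so it is open and convex; a straight-line homotopy contracts
    any non-empty intersection, and U of the componentwise transitive closure
    of a union is the intersection of the U's, which gives completeness.
    An injective configuration lies in U of the regular double order
    "compare x-coordinates, then y-coordinates on a common vertical line".
    For properness, if f lies in U(d) and U(d s), it lies in U(e) and U(e s)
    for a regular constituent e of d, with level function h.  By counting, a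
    permutation moving some element out of a cut {h <= t} also moves some
    element into it; the resulting pair of e.1-comparisons contradicts the
    x-coordinates of f, so h o s = h.  Then s preserves the lexicographic
    strict total order e.1 \/ e.2, and a finite order automorphism is the
    identity. *)

Lemma In_flatten (T : Type) (xss : seq (seq T)) x :
  List.In x (flatten xss) <-> exists2 xs, List.In xs xss & List.In x xs.
Proof.
elim: xss => [|xs xss IH] /=; first by split=> [[]|[? []]].
rewrite List.in_app_iff IH; split=> [[xs_x|[ys xss_ys ys_x]]|[ys [<-|xss_ys] ys_x]].
- by exists xs => //; left.
- by exists ys => //; right.
- by left.
- by right; exists ys.
Qed.

Lemma In_choice_map (X Y : Type) (P : Y -> Prop) (g : Y -> X) (xs : seq X) :
  (forall x, List.In x xs -> exists2 y, P y & x = g y) ->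
  exists2 ys, (forall y, List.In y ys -> P y) & xs = map g ys.
Proof.
elim: xs => [|x xs IH] xsP; first by exists [::].
have [y Py ->] := xsP x (or_introl erefl).
have [ys ysP ->] := IH (fun x' xs_x' => xsP x' (or_intror xs_x')).
by exists (y :: ys) => // y' [<-|/ysP].
Qed.

Lemma ptws_continuous (T : topologicalType) (U : Type) (V : topologicalType)
    (h : T -> {ptws U -> V}) :
  (forall u, continuous (fun x => h x u)) -> continuous h.
Proof.
move=> h_cont x; apply/cvg_sup => u; apply/cvg_image.
  by apply/seteqP; split=> // v _; exists (fun=> v).
move=> N /(h_cont u x) hN; exists ((fun g => g u) @^-1` N) => //.
by rewrite image_preimage //; apply/seteqP; split=> // v _; exists (fun=> v).
Qed.

Section TransitiveClosure.
Context {T : Type}.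
Implicit Types (r : prel T) (rs : seq (prel T)).

Definition relpre {U : Type} (s : T -> U) (r : prel U) : prel T :=
  fun a b => r (s a) (s b).

Lemma prel_ext r r' : (forall a b, r a b <-> r' a b) -> r = r'.
Proof. by move=> rr'; apply/funext => a; apply/funext => b; apply/propext. Qed.

Lemma tc_union_step {rs r a b} : List.In r rs -> r a b -> tc_union rs a b.
Proof. by move=> rs_r rab; apply: t_step; exists r. Qed.

Lemma tc_union_min rs (P : prel T) :
  (forall a b c, P a b -> P b c -> P a c) ->
  (forall r, List.In r rs -> forall a b, r a b -> P a b) ->
  forall a b, tc_union rs a b -> P a b.
Proof.
move=> P_tr rsP a b; elim=> [x y [r /rsP]|x y z _ Pxy _ Pyz]; first exact.
exact: P_tr Pxy Pyz.
Qed.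

Lemma tc_union_nil {a b} : ~ tc_union ([::] : seq (prel T)) a b.
Proof. by apply: (@tc_union_min _ (fun _ _ => False)) => // r []. Qed.

Lemma tc_union1 r : (forall a b c, r a b -> r b c -> r a c) -> tc_union [:: r] = r.
Proof.
move=> r_tr; apply: prel_ext => a b; split; last by apply: tc_union_step; left.
by apply: tc_union_min => // r' [<-|[]].
Qed.

Lemma tc_union_flatten (rss : seq (seq (prel T))) :
  tc_union (map (@tc_union T) rss) = tc_union (flatten rss).
Proof.
apply: prel_ext => a b; split.
- apply: tc_union_min => [x y z|_ /List.in_map_iff[rs [<- rss_rs]]]; first exact: t_trans.
  apply: tc_union_min => [x y z|r rs_r x y]; first exact: t_trans.
  by apply: tc_union_step; apply/In_flatten; exists rs.
- apply: tc_union_min => [x y z|r /In_flatten[rs rss_rs rs_r] x y rxy].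
    exact: t_trans.
  apply: (tc_union_step (List.in_map _ _ _ rss_rs)).
  exact: tc_union_step rxy.
Qed.

End TransitiveClosure.

Lemma tc_union_relpre (T U : Type) (s : T -> U) (rs : seq (prel U)) : bijective s ->
  tc_union (map (relpre s) rs) = relpre s (tc_union rs).
Proof.
case=> g sK gK; apply: prel_ext => a b; split.
  apply: tc_union_min => [x y z|_ /List.in_map_iff[r [<- rs_r]] x y]; first exact: t_trans.
  by rewrite /relpre; exact: tc_union_step rs_r.
suff gP x y : tc_union rs x y -> tc_union (map (relpre s) rs) (g x) (g y).
  by move=> /gP; rewrite !sK.
apply: (@tc_union_min _ _ (fun x y => tc_union _ (g x) (g y))).
  by move=> x' y' z'; exact: t_trans.
move=> r rs_r x' y' rxy.
by apply: (tc_union_step (List.in_map _ _ _ rs_r)); rewrite /relpre !gK.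
Qed.

Section PermutationRigidity.
Context {A : finType}.
Implicit Type s : {perm A}.

Lemma perm_exit_entry s (K : pred A) u : K u -> ~~ K (s u) ->
  exists2 v, ~~ K v & K (s v).
Proof.
move=> Ku nKsu; apply: contra_notP (negP nKsu) => no_entry.
have sub : s @^-1: [set x | K x]%SET \subset [set x | K x]%SET.
  apply/fintype.subsetP => v; rewrite !inE; apply: contraLR => nKv.
  by apply/negP => Ksv; apply: no_entry; exists v.
have := eqEcard (s @^-1: [set x | K x]%SET) [set x | K x]%SET.
rewrite sub card_preimset ?leqnn; last exact: perm_inj.
by move=> /eqP/setP/(_ u); rewrite !inE Ku.
Qed.

Lemma perm_pred_invariant s (K : pred A) :
  (forall u v, K u -> ~~ K (s u) -> ~~ K v -> K (s v) -> False) ->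
  forall x, K (s x) = K x.
Proof.
move=> no_cross x; case Kx: (K x).
  apply: contraT => nKsx; have [v nKv Ksv] := @perm_exit_entry s K x Kx nKsx.
  by case: (no_cross x v Kx nKsx nKv Ksv).
apply/negbTE/negP => Ksx.
have [|v] := @perm_exit_entry s (predC K) x (negbT Kx); first by rewrite /= Ksx.
rewrite /= negbK => Kv nKsv.
by case: (no_cross v x Kv nKsv (negbT Kx) Ksx).
Qed.

Lemma perm_levels_fixed s (h : A -> nat) :
  (forall u v, (h u < h v)%N -> (h (s v) < h (s u))%N -> False) ->
  forall x, h (s x) = h x.
Proof.
move=> no_inv.
have cut t x : (h (s x) <= t)%N = (h x <= t)%N.
  apply: (@perm_pred_invariant s (fun x => h x <= t)%N) => u v /= hu hsu hv hsv.
  rewrite -ltnNge in hsu; rewrite -ltnNge in hv.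
  exact: no_inv _ _ (leq_ltn_trans hu hv) (leq_ltn_trans hsv hsu).
by move=> x; apply/eqP; rewrite eqn_leq cut leqnn -cut leqnn.
Qed.

Lemma perm_strict_total_id s (L : prel A) :
  (forall a, ~ L a a) -> (forall a b c, L a b -> L b c -> L a c) ->
  (forall a b, a <> b -> L a b \/ L b a) ->
  (forall a b, L a b -> L (s a) (s b)) -> s = 1%g.
Proof.
move=> L_irr L_tr L_tot L_s.
have cut a x : L a (s x) <-> L a x.
  have /negb_inj E : ~~ `[< L a (s x) >] = ~~ `[< L a x >].
    apply: (@perm_pred_invariant s (fun x => ~~ `[< L a x >])) => u v.
    move=> /asboolPn nLau /negPn/asboolP Lasu /negPn/asboolP Lav /asboolPn nLasv.
    have uv : u <> v by move=> uv; apply: nLau; rewrite uv.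
    case: (L_tot u v uv) => [/L_s Lsuv|Lvu].
      exact: nLasv (L_tr _ _ _ Lasu Lsuv).
    exact: nLau (L_tr _ _ _ Lav Lvu).
  by split=> /asboolP; [rewrite E|rewrite -E] => /asboolP.
apply/permP => a; rewrite perm1; case: (eqVneq (s a) a) => // /eqP sa_a.
by case: (L_tot _ _ sa_a) => [/(cut (s a) a).2|/(cut a a).1] /L_irr.
Qed.

End PermutationRigidity.

Lemma semi_linear_lt {A : finType} {disp : Order.disp_t} {T : orderType disp} (g : A -> T) :
  semi_linear (fun a b => (g a < g b)%O).
Proof.
pose xs := sort <=%O (undup [seq g a | a <- enum A]).
have xs_lt : sorted <%O xs by rewrite sort_lt_sorted undup_uniq.
have xs_le : sorted <=%O xs := sort_le_sorted _.
have xs_g a : g a \in xs by rewrite mem_sort mem_undup map_f ?mem_enum.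
exists (size xs), (fun a => (index (g a) xs).+1); split; [|split].
- by move=> a; rewrite ltnS index_mem xs_g.
- move=> [//|k] /= k_lt.
  have [a0 _] : exists a0, a0 \in A.
    apply/card_gt0P; rewrite cardE -(size_map g).
    by apply: leq_trans (size_undup _); rewrite -(size_sort <=%O) (leq_ltn_trans _ k_lt).
  have := mem_nth (g a0) k_lt; rewrite mem_sort mem_undup => /mapP[a _ ga].
  by exists a; rewrite -ga index_uniq // sort_uniq undup_uniq.
- move=> a b; rewrite ltnS; split=> [ab|].
    rewrite ltnNge; apply/negP.
    move=> /(sorted_leq_index le_trans lexx xs_le _ _ (xs_g b) (xs_g a)).
    by rewrite leNgt ab.
  exact: (sorted_ltn_index lt_trans xs_lt _ _ (xs_g a) (xs_g b)).
Qed.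

Lemma open_forall_lt (R : realFieldType) (T : topologicalType) (I : finType)
    (P : I -> Prop) (g1 g2 : I -> T -> R) :
  (forall i, continuous (g1 i)) -> (forall i, continuous (g2 i)) ->
  open [set x | forall i, P i -> g1 i x < g2 i x].
Proof.
move=> g1_cont g2_cont; rewrite openE => x x_lt.
apply: (@filter_forall _ _ (fun i y => P i -> g1 i y < g2 i y)) => i.
have [Pi|nPi] := pselect (P i); last by apply: nearW => y /nPi.
have lt_open : open [set y | g1 i y < g2 i y].
  have -> : [set y | g1 i y < g2 i y] = (fun y => g2 i y - g1 i y) @^-1` [set z | 0 < z].
    by apply/seteqP; split=> y /=; rewrite subr_gt0.
  apply: open_comp; last exact: open_gt.
  by move=> y _; exact: continuousB (g2_cont i y) (g1_cont i y).
by rewrite openE in lt_open; apply: filterS (lt_open x (x_lt i Pi)) => y + _.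
Qed.

Lemma convex_lt (R : realDomainType) (t u1 u2 v1 v2 : R) :
  0 <= t <= 1 -> u1 < u2 -> v1 < v2 ->
  (1 - t) * u1 + t * v1 < (1 - t) * u2 + t * v2.
Proof.
case/andP=> t_ge0 t_le1 u12 v12; have t'_ge0 : 0 <= 1 - t by rewrite subr_ge0.
have [t_gt0|t_le0] := ltrP 0 t.
  by apply: ler_ltD; [rewrite ler_wpM2l // ltW|rewrite ltr_pM2l].
have -> : t = 0 by apply/le_anti; rewrite t_le0 t_ge0.
by rewrite subr0 !mul1r !mul0r !addr0.
Qed.

Section ConfigurationCover.
Context {R : realType} {A : finType}.
Implicit Types (d e : dord A) (ds es : seq (dord A)) (f c : config R A) (s : {perm A}).

Lemma Uset_dunion es : Uset R (dunion es) = intersection (Uset R) es.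
Proof.
apply/seteqP; split=> f.
  case=> f1 f2 e es_e; split=> a b eab.
    by apply: f1; exact: tc_union_step (List.in_map _ _ _ es_e) eab.
  by apply: f2; exact: tc_union_step (List.in_map _ _ _ es_e) eab.
move=> Uf; split; apply: tc_union_min => [a b c|_ /List.in_map_iff[e [<- es_e]]].
- exact: lt_trans.
- by have [] := Uf e es_e.
- exact: lt_trans.
- by have [] := Uf e es_e.
Qed.

Lemma dunion_flatten (ess : seq (seq (dord A))) :
  dunion (map (@dunion A) ess) = dunion (flatten ess).
Proof.
by rewrite /dunion !map_flatten -!tc_union_flatten -!map_comp.
Qed.

Lemma dunion_act ds s : dunion (map (fun e => dord_act e s) ds) = dord_act (dunion ds) s.
Proof.
have s_bij : bijective s := Bijective (permK s) (permKV s).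
have act1 : map fst (map (fun e => dord_act e s) ds) = map (relpre s) (map fst ds).
  by rewrite -!map_comp.
have act2 : map snd (map (fun e => dord_act e s) ds) = map (relpre s) (map snd ds).
  by rewrite -!map_comp.
by rewrite /dunion act1 act2 !tc_union_relpre.
Qed.

Lemma double_order_act d s : is_double_order d -> is_double_order (dord_act d s).
Proof.
case=> [[irr1 tr1] [[irr2 tr2] cmp]]; split; [|split].
- by split=> [a|a b c]; [exact: irr1|exact: tr1].
- by split=> [a|a b c]; [exact: irr2|exact: tr2].
- by move=> a b ab; apply: cmp => /perm_inj.
Qed.

Lemma regular_act e s : regular e -> regular (dord_act e s).
Proof.
case=> e_dord [[l [h [h_rng [h_onto e1_h]]]] e1_e2]; split; first exact: double_order_act.
split; last by move=> a b /e1_e2.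
exists l, (h \o s); split=> [a|]; first exact: h_rng.
split=> [k /h_onto[a <-]|a b]; last exact: e1_h.
by exists ((s^-1)%g a); rewrite /= permKV.
Qed.

Lemma semi_regular_act d s : semi_regular d -> semi_regular (dord_act d s).
Proof.
case=> d_dord [es [es_reg d_es]]; split; first exact: double_order_act.
exists (map (fun e => dord_act e s) es); split; last by rewrite dunion_act d_es.
by move=> _ /List.in_map_iff[e [<- es_e]]; exact/regular_act/es_reg.
Qed.

Lemma set_act_Uset d s : set_act (Uset R d) s = Uset R (dord_act d s).
Proof.
apply/seteqP; split=> [_ [f [f1 f2] <-]|f [f1 f2]].
  by split=> a b; [exact: f1|exact: f2].
exists (conf_act f (s^-1)%g).
  by split=> a b dab; [apply: f1|apply: f2]; rewrite /= !permKV.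
by apply/funext => a; rewrite /conf_act permK.
Qed.

Lemma Uset_sub_OConf d : is_double_order d -> Uset R d `<=` OConf R A.
Proof.
case=> _ [_ cmp] f [f1 f2] a b fab; case: (eqVneq a b) => // /eqP ab; exfalso.
by have [[/f1|/f1]|[/f2|/f2]] := cmp a b ab; rewrite fab ltxx.
Qed.

Lemma coord_continuous (k : R * R -> R) a :
  continuous k -> continuous (fun f : config R A => k (f a)).
Proof.
move=> k_cont f.
exact: (continuous_comp (@proj_continuous _ _ a f) (k_cont _)).
Qed.

Lemma open_Uset d : open (Uset R d).
Proof.
have -> : Uset R d =
    [set f | forall p : A * A, d.1 p.1 p.2 -> (f p.1).1 < (f p.2).1] `&`
    [set f | forall p : A * A, d.2 p.1 p.2 -> (f p.1).2 < (f p.2).2].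
  apply/seteqP; split=> f [f1 f2]; split.
  - by move=> [a b]; exact: f1.
  - by move=> [a b]; exact: f2.
  - by move=> a b; exact: (f1 (a, b)).
  - by move=> a b; exact: (f2 (a, b)).
apply: openI; apply: open_forall_lt => -[a b]; apply: coord_continuous => p.
- exact: cvg_fst.
- exact: cvg_fst.
- exact: cvg_snd.
- exact: cvg_snd.
Qed.

Lemma regular_semi_regular e : regular e -> semi_regular e.
Proof.
move=> e_reg; have [e_dord _] := e_reg; split=> //.
exists [:: e]; split; first by move=> _ [<-|[]].
case: e {e_reg} e_dord => e1 e2 [[_ tr1] [[_ tr2] _]].
by rewrite /dunion /= !tc_union1.
Qed.

Definition coord_dord f : dord A :=
  (fun a b => is_true ((f a).1 < (f b).1),
   fun a b => (f a).1 = (f b).1 /\ (f a).2 < (f b).2).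

Lemma coord_dord_regular f : injective f -> regular (coord_dord f).
Proof.
move=> f_inj; split; [split; [|split]|split].
- by split=> [a|a b c]; [rewrite /= ltxx|exact: lt_trans].
- split=> [a [_]|a b c [ab1 ab2] [bc1 bc2]]; first by rewrite ltxx.
  by split; [rewrite ab1 bc1|exact: lt_trans ab2 bc2].
- move=> a b ab; have fab : f a != f b by apply/eqP => /f_inj.
  have [x_lt|x_gt|x_eq] := ltgtP (f a).1 (f b).1.
  + by left; left.
  + by left; right.
  + right; have : (f a).2 != (f b).2.
      apply: contra fab => /eqP y_eq.
      by rewrite [f a]surjective_pairing [f b]surjective_pairing x_eq y_eq.
    by case/lt_total/orP => ?; [left|right].
- exact: (semi_linear_lt (fun a => (f a).1)).
- by move=> a b ab [[x_eq _]|[x_eq _]]; move: ab; rewrite /= x_eq ltxx.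
Qed.

Lemma Uset_coord_dord f : Uset R (coord_dord f) f.
Proof. by split=> a b //= []. Qed.

Lemma dunion_double_order {ds d} : List.In d ds -> is_double_order d ->
  Uset R (dunion ds) !=set0 -> is_double_order (dunion ds).
Proof.
move=> ds_d [_ [_ cmp]] [f [f1 f2]]; split; [|split].
- by split=> [a /f1|a b c]; [rewrite ltxx|exact: t_trans].
- by split=> [a /f2|a b c]; [rewrite ltxx|exact: t_trans].
- by move=> a b /cmp[] [] dab; [left; left|left; right|right; left|right; right];
    exact: tc_union_step (List.in_map _ _ _ ds_d) dab.
Qed.

Lemma semi_regular_dunion ds : ds <> [::] -> (forall d, List.In d ds -> semi_regular d) ->
  Uset R (dunion ds) !=set0 -> semi_regular (dunion ds).
Proof.
case: ds => [//|d0 ds] _ ds_sr U_ne; split.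
  apply: (dunion_double_order (d := d0)) U_ne; first by left.
  exact: (ds_sr d0 (or_introl erefl)).1.
have [ess ess_reg ->] : exists2 ess,
    (forall es, List.In es ess -> forall e, List.In e es -> regular e) &
    d0 :: ds = map (@dunion A) ess.
  by apply: In_choice_map => d /ds_sr[_ [es [es_reg ->]]]; exists es.
exists (flatten ess); split; last exact: dunion_flatten.
by move=> e /In_flatten[es /ess_reg]; apply.
Qed.

Section RegularRigidity.
Variables (e : dord A) (h : A -> nat).
Hypotheses (e_dord : is_double_order e) (e1_h : forall a b, e.1 a b <-> (h a < h b)%N)
  (e1_e2 : forall a b, e.1 a b -> ~ comparable_by e.2 a b).

Lemma e2_level {a b} : e.2 a b -> h a = h b.
Proof.
move=> e2ab; apply/eqP; rewrite eqn_leq.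
by apply/andP; split; rewrite leqNgt; apply/negP => /e1_h /e1_e2; apply; [right|left].
Qed.

Let lex : prel A := fun a b => e.1 a b \/ e.2 a b.

Let lex_irr a : ~ lex a a.
Proof. by have [[irr1 _] [[irr2 _] _]] := e_dord; case=> [/irr1|/irr2]. Qed.

Let lex_trans x y z : lex x y -> lex y z -> lex x z.
Proof.
have [[_ tr1] [[_ tr2] _]] := e_dord.
case=> [xy|xy] [yz|yz].
- by left; exact: tr1 xy yz.
- by left; apply/e1_h; rewrite -(e2_level yz); exact/e1_h.
- by left; apply/e1_h; rewrite (e2_level xy); exact/e1_h.
- by right; exact: tr2 xy yz.
Qed.

Let lex_total a b : a <> b -> lex a b \/ lex b a.
Proof. by move=> /e_dord.2.2[][] ?; [left; left|right; left|left; right|right; right]. Qed.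

Lemma regular_level_rigid s f : Uset R e f -> Uset R (dord_act e s) f -> s = 1%g.
Proof.
case=> f1 f2 [sf1 sf2].
have h_s : forall x, h (s x) = h x.
  apply: perm_levels_fixed => u v /e1_h/f1 uv /e1_h/sf1 vu.
  by have := lt_trans uv vu; rewrite ltxx.
apply: (@perm_strict_total_id _ s lex lex_irr lex_trans lex_total) => x y [/e1_h xy|xy].
  by left; apply/e1_h; rewrite !h_s.
have [[irr1 _] [[irr2 _] cmp]] := e_dord.
have sxy : s x <> s y by move=> /perm_inj x_y; apply: (irr2 x); rewrite {2}x_y.
have [[|]|[sxy2|syx2]] := cmp _ _ sxy.
- by move=> /e1_h; rewrite !h_s (e2_level xy) ltnn.
- by move=> /e1_h; rewrite !h_s (e2_level xy) ltnn.
- by right.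
- by have := lt_trans (f2 _ _ xy) (sf2 _ _ syx2); rewrite ltxx.
Qed.

End RegularRigidity.

Lemma regular_rigid {e s f} : regular e -> Uset R e f -> Uset R (dord_act e s) f -> s = 1%g.
Proof. by case=> e_dord [[l [h [_ [_ e1_h]]]] e1_e2]; exact: regular_level_rigid. Qed.

Lemma semi_regular_rigid {d s f} :
  semi_regular d -> Uset R d f -> Uset R (dord_act d s) f -> s = 1%g.
Proof.
case=> d_dord [es [es_reg d_es]]; subst d.
case: es es_reg d_dord => [|e es] es_reg [_ [_ cmp]] Uf Usf.
  apply/permP => a; rewrite perm1; case: (eqVneq (s a) a) => // /eqP sa_a.
  by case: (cmp _ _ sa_a) => -[] /tc_union_nil.
rewrite Uset_dunion in Uf; rewrite -dunion_act Uset_dunion in Usf.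
exact: regular_rigid (es_reg e (or_introl erefl)) (Uf e (or_introl erefl))
  (Usf _ (or_introl erefl)).
Qed.

Definition segment c (p : R * config R A) : config R A := (1 - p.1) *: p.2 + p.1 *: c.

Lemma Uset_segment {d f c t} : 0 <= t <= 1 -> Uset R d f -> Uset R d c ->
  Uset R d (segment c (t, f)).
Proof.
by move=> t01 [f1 f2] [c1 c2]; split=> a b dab; apply: convex_lt t01 _ _;
  [exact: f1|exact: c1|exact: f2|exact: c2].
Qed.

Lemma segment_continuous c : continuous (segment c).
Proof.
apply: ptws_continuous => a p.
have -> : (segment c)^~ a = fun q => (1 - q.1) *: q.2 a + q.1 *: c a by [].
apply: cvgD; apply: cvgZ.
- by apply: cvgB; [exact: cvg_cst|exact: cvg_fst].
- exact: (@cvg_comp _ _ _ snd (fun g : config R A => g a) _ _ _ cvg_snd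
    (@proj_continuous _ _ a p.2)).
- exact: cvg_fst.
- exact: cvg_cst.
Qed.

Lemma star_contractible {X : set (config R A)} {c} : X c ->
  (forall t f, 0 <= t <= 1 -> X f -> X (segment c (t, f))) -> contractible R X.
Proof.
move=> Xc X_star; exists c => //; exists (segment c); split.
- exact/continuous_subspaceT/segment_continuous.
- by move=> t f; exact: X_star.
- by move=> f _; rewrite /segment /= subr0 scale1r scale0r addr0.
- by move=> f _; rewrite /segment /= subrr scale0r add0r scale1r.
Qed.

End ConfigurationCover.

Theorem proposition5p6 (R : realType) (A : finType) :
  (* each member is an open subset of OConf(A, R^2) *)
  (forall d : dord A, semi_regular d ->
     Uset R d `<=` OConf R A /\ open_in (OConf R A) (Uset R d)) /\
  (* it covers OConf(A, R^2) *)
  (forall f : config R A, OConf R A f ->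
     exists2 d : dord A, semi_regular d & Uset R d f) /\
  (* Sigma_A-equivariance: Sigma_A acts on the index set R^+(A), and U_d s = U_(d s) *)
  (forall (d : dord A) (s : {perm A}), semi_regular d ->
     semi_regular (dord_act d s) /\
     set_act (Uset R d) s = Uset R (dord_act d s)) /\
  (* properness *)
  (forall (d : dord A) (s : {perm A}), semi_regular d -> s != 1%g ->
     Uset R d `&` Uset R (dord_act d s) = set0) /\
  (* good: non-empty finite intersections are contractible *)
  (forall ds : seq (dord A), ds <> [::] ->
     (forall d, List.In d ds -> semi_regular d) ->
     intersection (Uset R) ds !=set0 ->
     contractible R (intersection (Uset R) ds)) /\
  (* complete: closed under non-empty intersections *)
  (forall ds : seq (dord A), ds <> [::] ->
     (forall d, List.In d ds -> semi_regular d) ->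
     intersection (Uset R) ds !=set0 ->
     exists2 e : dord A, semi_regular e & Uset R e = intersection (Uset R) ds).
Proof.
split.
  move=> d [d_dord _]; split; first exact: Uset_sub_OConf.
  by exists (Uset R d); [exact: open_Uset|rewrite setIidl //; exact: Uset_sub_OConf].
split.
  move=> f f_inj; exists (coord_dord f); last exact: Uset_coord_dord.
  exact/regular_semi_regular/coord_dord_regular.
split; first by move=> d s d_sr; split; [exact: semi_regular_act|exact: set_act_Uset].
split.
  move=> d s d_sr s_1; apply/seteqP; split=> // f [Uf Usf].
  by move: s_1; rewrite (semi_regular_rigid d_sr Uf Usf) eqxx.
split.
  move=> ds _ _ [c Ic]; apply: (star_contractible Ic) => t f t01 If e ds_e.
  exact: Uset_segment t01 (If e ds_e) (Ic e ds_e).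
move=> ds ds_nil ds_sr I_ne; exists (dunion ds); last exact: Uset_dunion.
by apply: (semi_regular_dunion (R := R)) => //; rewrite Uset_dunion.
Qed.
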